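(* Let $\mathcal{S}$ be an $E$-unitary inverse semigroupoid, $X$ a partially ordered set, and $\theta=(\{X_s\}_{s\in\mathcal{S}},\{\theta_s\}_{s\in\mathcal{S}})$ an ordered global action of $\mathcal{S}$ on $X$. For $s\in\mathcal{S}$ put $D_{\pi_\sigma(s)}=\bigcup_{t:(s,t)\in\sigma}X_t$. Then: if $(s,t)\in\sigma$ and $x\in X_{s^*}\cap X_{t^*}$, then $\theta_s(x)=\theta_t(x)$; consequently $\alpha_{\pi_\sigma(s)}:D_{\pi_\sigma(s^* )}\to D_{\pi_\sigma(s)}$, $\alpha_{\pi_\sigma(s)}(x)=\theta_t(x)$ for any $t$ with $(s,t)\in\sigma$ and $x\in X_{t^*}$, is well defined, and $\alpha=(\{D_{\pi_\sigma(s)}\}_{s\in\mathcal{S}},\{\alpha_{\pi_\sigma(s)}\}_{s\in\mathcal{S}})$ is an ordered partial action of the groupoid $\mathcal{S}/\sigma$ on $X$ with $\alpha_{\pi_\sigma(s)}(x)=\theta_s(x)$ for all $x\in X_{s^*}$.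
   Context: Inverse semigroupoid: arrows $\mathcal{S}$, objects $\mathcal{S}^{(0)}$, maps $d,c$, associative multiplication on $\mathcal{S}^{(2)}=\{(s,t):d(s)=c(t)\}$ with $d(st)=d(t)$, $c(st)=c(s)$, unique $s^*$ with $ss^*s=s$, $s^*ss^*=s^*$; $E(\mathcal{S})$ = idempotents; natural order on parallel arrows $s\leqslant t$ iff $s=te$ for an idempotent $e$ with $(t,e)\in\mathcal{S}^{(2)}$. $(s,t)\in\sigma$ iff some $r\leqslant s,t$; $\sigma$ is a congruence (it relates only parallel arrows and is compatible with products), and $\mathcal{S}/\sigma$ is the groupoid whose arrows are $\sigma$-classes $\pi_\sigma(s)$, objects $\mathcal{S}^{(0)}$, $d(\pi_\sigma(s))=d(s)$, $c(\pi_\sigma(s))=c(s)$, $\pi_\sigma(s)\pi_\sigma(t)=\pi_\sigma(st)$, $\pi_\sigma(s)^*=\pi_\sigma(s^* )$. $\mathcal{S}$ is $E$-unitary if $(s,e)\in\sigma$ with $e$ idempotent implies $s$ idempotent. A partial action of $\mathcal{S}$ on a set $X$ is a pair $(\{X_s\},\{\theta_s\})$, $X_s\subseteq X$, $\theta_s:X_{s^*}\to X_s$, with: each $\theta_s$ bijective, $\theta_s^{-1}=\theta_{s^*}$, $X=\bigcup_sX_s$; $\theta_s\circ\theta_t\subseteq\theta_{st}$ as partial maps for $(s,t)\in\mathcal{S}^{(2)}$; $X_s\subseteq X_t$ if $s\leqslant t$. Global: $\theta_s\circ\theta_t=\theta_{st}$. Ordered (on a poset): each $X_s$ an order ideal and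 each $\theta_s$ an order isomorphism. *)

(* plain Rocq, sets as predicates, partial maps as total
   functions together with a domain predicate. *)

Record inverse_semigroupoid := {
  arr : Type;
  obj : Type;
  dom : arr -> obj;
  cod : arr -> obj;
  mul : arr -> arr -> arr;          (* product, meaningful on S^(2) *)
  inv : arr -> arr;
  dom_mul : forall s t, dom s = cod t -> dom (mul s t) = dom t;
  cod_mul : forall s t, dom s = cod t -> cod (mul s t) = cod s;
  mulA : forall s t u, dom s = cod t -> dom t = cod u ->
           mul (mul s t) u = mul s (mul t u);
  inv_spec : forall s, dom s = cod (inv s) /\ dom (inv s) = cod s /\
           mul (mul s (inv s)) s = s /\ mul (mul (inv s) s) (inv s) = inv s;
  inv_unique : forall s t, dom s = cod t -> dom t = cod s ->
           mul (mul s t) s = s -> mul (mul t s) t = t -> t = inv s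
}.

Arguments dom {_}. Arguments cod {_}. Arguments mul {_}. Arguments inv {_}.

Section Semigroupoid.
Variable S : inverse_semigroupoid.

Definition composable (s t : arr S) : Prop := dom s = cod t.

Definition idempotent (e : arr S) : Prop := composable e e /\ mul e e = e.

Definition nat_le (s t : arr S) : Prop :=
  dom s = dom t /\ cod s = cod t /\
  exists e, idempotent e /\ composable t e /\ s = mul t e.

Definition sigma (s t : arr S) : Prop := exists r, nat_le r s /\ nat_le r t.

Definition E_unitary : Prop :=
  forall s e, idempotent e -> sigma s e -> idempotent s.

(** Natural order of the quotient groupoid S/sigma, written on representatives:
    pi(s) <= pi(t) iff they are parallel and pi(s) = pi(t) pi(u) for an
    idempotent pi(u) of S/sigma with (pi(t),pi(u)) composable. *)
Definition quot_le (s t : arr S) : Prop :=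
  dom s = dom t /\ cod s = cod t /\
  exists u, composable t u /\ composable u u /\ sigma (mul u u) u /\
            sigma s (mul t u).

End Semigroupoid.

Arguments composable {_}. Arguments idempotent {_}. Arguments nat_le {_}.
Arguments sigma {_}. Arguments quot_le {_}.

Definition bij_on {X : Type} (A B : X -> Prop) (f : X -> X) : Prop :=
  (forall x, A x -> B (f x)) /\
  (forall x y, A x -> A y -> f x = f y -> x = y) /\
  (forall y, B y -> exists x, A x /\ f x = y).

Definition order_ideal {X : Type} (leX : X -> X -> Prop) (A : X -> Prop) : Prop :=
  forall x y, A y -> leX x y -> A x.

(** * Partial actions, for a generic index structure
    (comp = composability, mulI = product, invI = inverse, leI = natural order).
    [Xs s] is the domain predicate of X_s, [th s] the map theta_s : X_{s^*} -> X_s. *)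
Definition partial_action {I X : Type} (comp : I -> I -> Prop)
    (mulI : I -> I -> I) (invI : I -> I) (leI : I -> I -> Prop)
    (Xs : I -> X -> Prop) (th : I -> X -> X) : Prop :=
  (forall s, bij_on (Xs (invI s)) (Xs s) (th s)) /\
  (forall s, (forall x, Xs (invI s) x -> th (invI s) (th s x) = x) /\
             (forall y, Xs s y -> th s (th (invI s) y) = y)) /\
  (forall x, exists s, Xs s x) /\
  (forall s t, comp s t -> forall x, Xs (invI t) x -> Xs (invI s) (th t x) ->
       Xs (invI (mulI s t)) x /\ th (mulI s t) x = th s (th t x)) /\
  (forall s t, leI s t -> forall x, Xs s x -> Xs t x).

Definition ordered_action {I X : Type} (leX : X -> X -> Prop) (invI : I -> I)
    (Xs : I -> X -> Prop) (th : I -> X -> X) : Prop :=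
  (forall s, order_ideal leX (Xs s)) /\
  (forall s x y, Xs (invI s) x -> Xs (invI s) y ->
       (leX x y <-> leX (th s x) (th s y))).

Definition global_action {I X : Type} (comp : I -> I -> Prop)
    (mulI : I -> I -> I) (invI : I -> I)
    (Xs : I -> X -> Prop) (th : I -> X -> X) : Prop :=
  forall s t, comp s t -> forall x,
    ((Xs (invI t) x /\ Xs (invI s) (th t x)) <-> Xs (invI (mulI s t)) x) /\
    (Xs (invI t) x -> Xs (invI s) (th t x) -> th (mulI s t) x = th s (th t x)).

Definition sg_partial_action (S : inverse_semigroupoid) {X : Type}
    (Xs : arr S -> X -> Prop) (th : arr S -> X -> X) : Prop :=
  partial_action composable mul inv nat_le Xs th.

Definition sg_global_action (S : inverse_semigroupoid) {X : Type}
    (Xs : arr S -> X -> Prop) (th : arr S -> X -> X) : Prop :=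
  sg_partial_action S Xs th /\ global_action composable mul inv Xs th.

(** A family indexed by S/sigma is represented by a family indexed by S that
    is constant on sigma-classes; the groupoid operations of S/sigma are
    computed on representatives (pi(s)pi(t) = pi(st), pi(s)^* = pi(inv s),
    (pi s, pi t) composable iff d s = c t). *)
Definition sigma_invariant {S : inverse_semigroupoid} {X : Type}
    (D : arr S -> X -> Prop) (al : arr S -> X -> X) : Prop :=
  forall s t, sigma s t ->
    (forall x, D s x <-> D t x) /\ (forall x, D (inv s) x -> al s x = al t x).

Definition quot_partial_action (S : inverse_semigroupoid) {X : Type}
    (D : arr S -> X -> Prop) (al : arr S -> X -> X) : Prop :=
  sigma_invariant D al /\ partial_action composable mul inv quot_le D al.

Definition Dsig {S : inverse_semigroupoid} {X : Type}
    (Xs : arr S -> X -> Prop) (s : arr S) (x : X) : Prop :=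
  exists t, sigma s t /\ Xs t x.

From Stdlib Require Import ClassicalEpsilon.

(* If [(s, t)] is in [sigma], E-unitarity makes [t s^*] idempotent, and
   idempotents act as the identity; so [theta_t = theta_(t s^* ) o theta_s]
   agrees with [theta_s] wherever both are defined.  Gluing the [theta_t] over
   a [sigma]-class therefore defines [alpha_(pi s)], and since [sigma] is a
   congruence, each axiom of a partial action of [S/sigma] reduces to the
   corresponding axiom of the global action [theta] on suitable representatives.
   The natural order of the groupoid [S/sigma] is trivial, so its monotonicity
   axiom is immediate. *)

Section InverseSemigroupoid.
Variable S : inverse_semigroupoid.
Implicit Types r s t u e f : arr S.

Lemma dom_inv s : dom (inv s) = cod s.
Proof. exact (proj1 (proj2 (inv_spec S s))). Qed.

Lemma cod_inv s : cod (inv s) = dom s.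
Proof. exact (eq_sym (proj1 (inv_spec S s))). Qed.

Ltac dom_cod :=
  unfold composable in *; rewrite ?dom_inv, ?cod_inv in *;
  repeat first
    [ rewrite dom_inv | rewrite cod_inv
    | match goal with |- context [dom (mul ?a ?b)] => rewrite (dom_mul S a b) by dom_cod end
    | match goal with |- context [cod (mul ?a ?b)] => rewrite (cod_mul S a b) by dom_cod end ];
  congruence.

Ltac reassoc := repeat (rewrite mulA by dom_cod).
Ltac reassoc_in H := repeat (rewrite mulA in H by dom_cod).

Lemma mul_inv_r_mul s : mul s (mul (inv s) s) = s.
Proof. destruct (inv_spec S s) as [_ [_ [H _]]]. now reassoc_in H. Qed.

Lemma mul_inv_l_mul s : mul (inv s) (mul s (inv s)) = inv s.
Proof. destruct (inv_spec S s) as [_ [_ [_ H]]]. now reassoc_in H. Qed.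

Lemma inv_involutive s : inv (inv s) = s.
Proof.
  symmetry; apply inv_unique; try dom_cod.
  - exact (proj2 (proj2 (proj2 (inv_spec S s)))).
  - exact (proj1 (proj2 (proj2 (inv_spec S s)))).
Qed.

Lemma idempotent_inv e : idempotent e -> inv e = e.
Proof.
  intros [He Hee]; unfold composable in He.
  symmetry; apply inv_unique; try congruence; now rewrite !Hee.
Qed.

Lemma idempotent_mul_l e t : idempotent e -> dom e = cod t -> mul e (mul e t) = mul e t.
Proof. intros [He Hee] Ht. rewrite <- mulA by dom_cod. now rewrite Hee. Qed.

Lemma idempotent_mul_inv_r s : idempotent (mul s (inv s)).
Proof. split; [dom_cod|]. reassoc. now rewrite mul_inv_l_mul. Qed.

Lemma idempotent_mul_inv_l s : idempotent (mul (inv s) s).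
Proof. rewrite <- (inv_involutive s) at 2. apply idempotent_mul_inv_r. Qed.

(* With [a = (e f)^*], [f a e] is again an inverse of [e f]; hence [a = f a e] is
   idempotent, and so is [e f = a^*]. *)
Lemma idempotent_mul e f : idempotent e -> idempotent f -> dom e = dom f ->
  idempotent (mul e f).
Proof.
  intros He Hf Hef. pose proof He as [Hee _]. pose proof Hf as [Hff _].
  pose proof (inv_spec S (mul e f)) as [_ [_ [Ha1 Ha2]]].
  set (a := inv (mul e f)) in *.
  assert (Hdom_a : dom a = dom e) by (unfold a; dom_cod).
  assert (Hcod_a : cod a = dom e) by (unfold a; dom_cod).
  reassoc_in Ha1. reassoc_in Ha2.
  assert (Ha : mul f (mul a e) = a).
  { apply inv_unique; try dom_cod.
    - reassoc. rewrite (idempotent_mul_l f), (idempotent_mul_l e) by (auto; dom_cod).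
      exact Ha1.
    - reassoc. rewrite (idempotent_mul_l e), (idempotent_mul_l f) by (auto; dom_cod).
      transitivity (mul f (mul (mul a (mul e (mul f a))) e)); [now reassoc|].
      now rewrite Ha2. }
  assert (Haa : mul a a = a).
  { rewrite <- Ha at 1 2. reassoc.
    transitivity (mul f (mul (mul a (mul e (mul f a))) e)); [now reassoc|].
    now rewrite Ha2, Ha. }
  assert (Ha_idem : idempotent a) by (split; [dom_cod|exact Haa]).
  pose proof (idempotent_inv a Ha_idem) as Hinv. unfold a in Hinv.
  rewrite inv_involutive in Hinv. rewrite Hinv. exact Ha_idem.
Qed.

Lemma idempotent_comm e f : idempotent e -> idempotent f -> dom e = dom f ->
  mul e f = mul f e.
Proof.
  intros He Hf Hef.
  pose proof (idempotent_mul e f He Hf Hef) as [_ Hef_idem].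
  pose proof (idempotent_mul f e Hf He (eq_sym Hef)) as [_ Hfe_idem].
  pose proof He as [Hee _]. pose proof Hf as [Hff _].
  rewrite <- (idempotent_inv (mul e f)) by (split; [dom_cod|exact Hef_idem]).
  symmetry; apply inv_unique; try dom_cod.
  - reassoc. rewrite (idempotent_mul_l f), (idempotent_mul_l e) by (auto; dom_cod).
    now reassoc_in Hef_idem.
  - reassoc. rewrite (idempotent_mul_l e), (idempotent_mul_l f) by (auto; dom_cod).
    now reassoc_in Hfe_idem.
Qed.

Lemma inv_mul s t : dom s = cod t -> inv (mul s t) = mul (inv t) (inv s).
Proof.
  intro Hst. symmetry; apply inv_unique; try dom_cod.
  - transitivity (mul s (mul (mul (mul t (inv t)) (mul (inv s) s)) t)); [now reassoc|].
    rewrite (idempotent_comm (mul t (inv t)) (mul (inv s) s))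
      by (apply idempotent_mul_inv_r || apply idempotent_mul_inv_l || dom_cod).
    reassoc. rewrite mul_inv_r_mul.
    transitivity (mul (mul s (mul (inv s) s)) t); [now reassoc|].
    now rewrite mul_inv_r_mul.
  - transitivity (mul (inv t) (mul (mul (mul (inv s) s) (mul t (inv t))) (inv s)));
      [now reassoc|].
    rewrite (idempotent_comm (mul (inv s) s) (mul t (inv t)))
      by (apply idempotent_mul_inv_r || apply idempotent_mul_inv_l || dom_cod).
    reassoc. rewrite mul_inv_l_mul.
    transitivity (mul (mul (inv t) (mul t (inv t))) (inv s)); [now reassoc|].
    now rewrite mul_inv_l_mul.
Qed.

Lemma idempotent_conj e s : idempotent e -> dom e = cod s ->
  idempotent (mul (inv s) (mul e s)) /\ mul s (mul (inv s) (mul e s)) = mul e s.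
Proof.
  intros He Hs. pose proof He as [Hee _].
  assert (Hmove : mul s (mul (inv s) (mul e s)) = mul e s).
  { transitivity (mul (mul (mul s (inv s)) e) s); [now reassoc|].
    rewrite (idempotent_comm (mul s (inv s)) e)
      by (apply idempotent_mul_inv_r || assumption || dom_cod).
    reassoc. now rewrite mul_inv_r_mul. }
  split; [|exact Hmove].
  split; [dom_cod|]. reassoc. rewrite Hmove, idempotent_mul_l by (auto; dom_cod).
  reflexivity.
Qed.

Lemma nat_le_refl s : nat_le s s.
Proof.
  split; [reflexivity|split; [reflexivity|]].
  exists (mul (inv s) s). split; [apply idempotent_mul_inv_l|].
  split; [dom_cod|symmetry; apply mul_inv_r_mul].
Qed.

Lemma nat_le_mul_idempotent_r s e : idempotent e -> dom s = cod e -> nat_le (mul s e) s.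
Proof.
  intros He Hs. pose proof He as [Hee _].
  split; [dom_cod|split; [dom_cod|]]. now exists e.
Qed.

Lemma nat_le_mul_idempotent_l e s : idempotent e -> dom e = cod s -> nat_le (mul e s) s.
Proof.
  intros He Hs. pose proof He as [Hee _].
  destruct (idempotent_conj e s He Hs) as [Hconj Hmove].
  rewrite <- Hmove. apply nat_le_mul_idempotent_r; [exact Hconj|dom_cod].
Qed.

Lemma nat_le_trans r s t : nat_le r s -> nat_le s t -> nat_le r t.
Proof.
  intros [_ [_ [e [He [Hse ->]]]]] [_ [_ [f [Hf [Htf ->]]]]].
  pose proof He as [Hee _]. pose proof Hf as [Hff _].
  unfold composable in Hse. rewrite (dom_mul S) in Hse by exact Htf.
  rewrite mulA by dom_cod.
  apply nat_le_mul_idempotent_r; [apply idempotent_mul; auto|]; dom_cod.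
Qed.

Lemma nat_le_mul r s r' s' : nat_le r s -> nat_le r' s' -> dom s = cod s' ->
  nat_le (mul r r') (mul s s').
Proof.
  intros [_ [_ [e [He [Hse ->]]]]] [_ [_ [f [Hf [Hsf ->]]]]] Hss'.
  pose proof He as [Hee _]. pose proof Hf as [Hff _].
  destruct (idempotent_conj e s' He ltac:(dom_cod)) as [Hconj Hmove].
  replace (mul (mul s e) (mul s' f))
    with (mul (mul s s') (mul (mul (inv s') (mul e s')) f)).
  - apply nat_le_mul_idempotent_r; [apply idempotent_mul; auto|]; dom_cod.
  - transitivity (mul s (mul (mul s' (mul (inv s') (mul e s'))) f)); [now reassoc|].
    rewrite Hmove. now reassoc.
Qed.

Lemma nat_le_inv r s : nat_le r s -> nat_le (inv r) (inv s).
Proof.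
  intros [_ [_ [e [He [Hse ->]]]]]. pose proof He as [Hee _].
  rewrite inv_mul, idempotent_inv by (auto; dom_cod).
  apply nat_le_mul_idempotent_l; [exact He|dom_cod].
Qed.

Lemma sigma_refl s : sigma s s.
Proof. exists s. split; apply nat_le_refl. Qed.

Lemma sigma_sym s t : sigma s t -> sigma t s.
Proof. intros [r [Hrs Hrt]]. now exists r. Qed.

Lemma nat_le_sigma r s : nat_le r s -> sigma r s.
Proof. intro Hrs. exists r. split; [apply nat_le_refl|exact Hrs]. Qed.

Lemma sigma_parallel s t : sigma s t -> dom s = dom t /\ cod s = cod t.
Proof. intros [r [[Hds [Hcs _]] [Hdt [Hct _]]]]. split; congruence. Qed.

(* A common lower bound of [r1 <= t] and [r2 <= t] is [r1 f = r2 e], where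
   [r1 = t e] and [r2 = t f]. *)
Lemma sigma_trans s t u : sigma s t -> sigma t u -> sigma s u.
Proof.
  intros [r1 [Hr1s Hr1t]] [r2 [Hr2t Hr2u]].
  pose proof Hr1t as [_ [_ [e [He [Hte Hr1]]]]].
  pose proof Hr2t as [_ [_ [f [Hf [Htf Hr2]]]]].
  pose proof He as [Hee _]. pose proof Hf as [Hff _].
  exists (mul r1 f). split.
  - apply nat_le_trans with r1; [|exact Hr1s].
    apply nat_le_mul_idempotent_r; [exact Hf|subst; dom_cod].
  - apply nat_le_trans with r2; [|exact Hr2u].
    replace (mul r1 f) with (mul r2 e).
    + apply nat_le_mul_idempotent_r; [exact He|subst; dom_cod].
    + subst. reassoc. rewrite (idempotent_comm f e); auto; dom_cod.
Qed.

Lemma sigma_inv s t : sigma s t -> sigma (inv s) (inv t).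
Proof. intros [r [Hrs Hrt]]. exists (inv r). split; now apply nat_le_inv. Qed.

Lemma sigma_mul s t s' t' : sigma s t -> sigma s' t' -> dom s = cod s' ->
  sigma (mul s s') (mul t t').
Proof.
  intros Hst Hst' Hss'.
  destruct (sigma_parallel s t Hst) as [Hd Hc].
  destruct (sigma_parallel s' t' Hst') as [Hd' Hc'].
  destruct Hst as [r [Hrs Hrt]]. destruct Hst' as [r' [Hrs' Hrt']].
  exists (mul r r'). split; apply nat_le_mul; auto; congruence.
Qed.

Lemma sigma_quot_idempotent u : dom u = cod u -> sigma (mul u u) u ->
  sigma u (mul (inv u) u).
Proof.
  intros Hu Huu.
  apply sigma_trans with (mul (inv u) (mul u u)).
  - rewrite <- mulA by dom_cod. apply sigma_sym, nat_le_sigma.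
    apply nat_le_mul_idempotent_l; [apply idempotent_mul_inv_l|dom_cod].
  - apply sigma_mul; [apply sigma_refl|exact Huu|dom_cod].
Qed.

Lemma quot_le_sigma s t : quot_le s t -> sigma s t.
Proof.
  intros [Hd [Hc [u [Htu [Hu [Huu Hs]]]]]]. unfold composable in *.
  apply sigma_trans with (mul t u); [exact Hs|].
  apply sigma_trans with (mul t (mul (inv u) u)).
  - apply sigma_mul; [apply sigma_refl|now apply sigma_quot_idempotent|exact Htu].
  - apply nat_le_sigma, nat_le_mul_idempotent_r; [apply idempotent_mul_inv_l|dom_cod].
Qed.

Lemma E_unitary_mul_inv s t : E_unitary S -> sigma t s -> idempotent (mul t (inv s)).
Proof.
  intros HE Hts. destruct (sigma_parallel t s Hts) as [Hd Hc].
  apply HE with (mul s (inv s)); [apply idempotent_mul_inv_r|].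
  apply sigma_mul; [exact Hts|apply sigma_refl|dom_cod].
Qed.

Section Action.
Variables (X : Type) (leX : X -> X -> Prop).
Variables (Xs : arr S -> X -> Prop) (th : arr S -> X -> X).
Hypothesis Hglobal : sg_global_action S Xs th.
Hypothesis HE : E_unitary S.

Lemma theta_bij s : bij_on (Xs (inv s)) (Xs s) (th s).
Proof. exact (proj1 (proj1 Hglobal) s). Qed.

Lemma theta_maps s x : Xs (inv s) x -> Xs s (th s x).
Proof. apply theta_bij. Qed.

Lemma theta_inj s x y : Xs (inv s) x -> Xs (inv s) y -> th s x = th s y -> x = y.
Proof. apply theta_bij. Qed.

Lemma theta_inv_l s x : Xs (inv s) x -> th (inv s) (th s x) = x.
Proof. apply (proj1 (proj2 (proj1 Hglobal)) s). Qed.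

Lemma theta_cover x : exists s, Xs s x.
Proof. apply (proj1 (proj2 (proj2 (proj1 Hglobal)))). Qed.

Lemma theta_mul s t x : dom s = cod t -> Xs (inv t) x -> Xs (inv s) (th t x) ->
  Xs (inv (mul s t)) x /\ th (mul s t) x = th s (th t x).
Proof.
  intros Hst Ht Hs. destruct (proj2 Hglobal s t Hst x) as [Hdom Heq].
  split; [apply Hdom; now split|now apply Heq].
Qed.

Lemma theta_idempotent e y : idempotent e -> Xs e y -> th e y = y.
Proof.
  intros He Hy. pose proof He as [Hee Heq].
  assert (Hy' : Xs (inv e) y) by now rewrite idempotent_inv.
  assert (Hey : Xs (inv e) (th e y)) by (rewrite idempotent_inv; auto using theta_maps).
  destruct (theta_mul e e y Hee Hy' Hey) as [_ Hmul].
  rewrite Heq in Hmul.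
  symmetry; exact (theta_inj e _ _ Hy' Hey Hmul).
Qed.

Lemma theta_sigma_agree s t x : sigma s t -> Xs (inv s) x -> Xs (inv t) x ->
  th s x = th t x.
Proof.
  intros Hst Hs Ht.
  destruct (sigma_parallel s t Hst) as [Hd Hc].
  pose proof (E_unitary_mul_inv s t HE (sigma_sym s t Hst)) as He.
  assert (Hy : Xs (inv (inv s)) (th s x)) by (rewrite inv_involutive; now apply theta_maps).
  assert (Hx : Xs (inv t) (th (inv s) (th s x))) by now rewrite theta_inv_l.
  destruct (theta_mul t (inv s) (th s x) ltac:(dom_cod) Hy Hx) as [Hdom Hmul].
  rewrite (idempotent_inv _ He) in Hdom.
  now rewrite theta_inv_l, theta_idempotent in Hmul.
Qed.

Definition alpha (s : arr S) (x : X) : X :=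
  epsilon (inhabits (th s x)) (fun y => exists t, sigma s t /\ Xs (inv t) x /\ y = th t x).

Lemma alpha_spec s t x : sigma s t -> Xs (inv t) x -> alpha s x = th t x.
Proof.
  intros Hst Ht. unfold alpha.
  destruct (epsilon_spec (inhabits (th s x))
              (fun y => exists t, sigma s t /\ Xs (inv t) x /\ y = th t x))
    as [t' [Hst' [Ht' ->]]]; [now exists (th t x), t|].
  apply theta_sigma_agree; auto.
  now apply sigma_trans with s; [apply sigma_sym|].
Qed.

Lemma alpha_theta s x : Xs (inv s) x -> alpha s x = th s x.
Proof. apply alpha_spec, sigma_refl. Qed.

Lemma Dsig_inv s x : Dsig Xs (inv s) x <-> exists t, sigma s t /\ Xs (inv t) x.
Proof.
  split.
  - intros [u [Hsu Hu]]. exists (inv u).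
    rewrite inv_involutive. split; [|exact Hu].
    rewrite <- (inv_involutive s). now apply sigma_inv.
  - intros [t [Hst Ht]]. exists (inv t). split; [now apply sigma_inv|exact Ht].
Qed.

Lemma Dsig_sigma s t x : sigma s t -> Dsig Xs s x -> Dsig Xs t x.
Proof.
  intros Hst [u [Hsu Hu]]. exists u. split; [|exact Hu].
  now apply sigma_trans with s; [apply sigma_sym|].
Qed.

Lemma alpha_maps s x : Dsig Xs (inv s) x -> Dsig Xs s (alpha s x).
Proof.
  intros [t [Hst Ht]]%Dsig_inv. rewrite (alpha_spec s t x) by auto.
  exists t. split; [exact Hst|now apply theta_maps].
Qed.

Lemma alpha_inv_l s x : Dsig Xs (inv s) x -> alpha (inv s) (alpha s x) = x.
Proof.
  intros [t [Hst Ht]]%Dsig_inv. rewrite (alpha_spec s t x) by auto.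
  rewrite (alpha_spec (inv s) (inv t)); [now apply theta_inv_l|now apply sigma_inv|].
  rewrite inv_involutive. now apply theta_maps.
Qed.

Lemma alpha_inv_r s y : Dsig Xs s y -> alpha s (alpha (inv s) y) = y.
Proof.
  intro Hy. rewrite <- (inv_involutive s) in Hy |- * at 1.
  now apply alpha_inv_l.
Qed.

Lemma alpha_partial_action : partial_action composable mul inv quot_le (Dsig Xs) alpha.
Proof.
  split; [|split; [|split; [|split]]].
  - intro s. split; [exact (alpha_maps s)|split].
    + intros x y Hx Hy Hxy.
      now rewrite <- (alpha_inv_l s x Hx), <- (alpha_inv_l s y Hy), Hxy.
    + intros y Hy. exists (alpha (inv s) y). split; [|now apply alpha_inv_r].
      apply alpha_maps. now rewrite inv_involutive.
  - intro s. split; [exact (alpha_inv_l s)|exact (alpha_inv_r s)].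
  - intro x. destruct (theta_cover x) as [s Hs]. exists s, s. split; [apply sigma_refl|exact Hs].
  - intros s t Hst x Hx Hy.
    destruct (proj1 (Dsig_inv t x) Hx) as [v [Htv Hv]].
    rewrite (alpha_spec t v x) in Hy |- * by auto.
    destruct (proj1 (Dsig_inv s _) Hy) as [w [Hsw Hw]].
    assert (Hwv : dom w = cod v)
      by (destruct (sigma_parallel s w Hsw), (sigma_parallel t v Htv); dom_cod).
    destruct (theta_mul w v x Hwv Hv Hw) as [Hdom Hmul].
    assert (Hsig : sigma (mul s t) (mul w v)) by (apply sigma_mul; auto).
    split; [apply Dsig_inv; now exists (mul w v)|].
    now rewrite (alpha_spec (mul s t) (mul w v) x), (alpha_spec s w) by auto.
  - intros s t Hst x. apply Dsig_sigma, quot_le_sigma, Hst.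
Qed.

Lemma alpha_sigma_invariant : sigma_invariant (Dsig Xs) alpha.
Proof.
  intros s t Hst. split.
  - intro x. split; apply Dsig_sigma; auto using sigma_sym.
  - intros x [u [Hsu Hu]]%Dsig_inv.
    assert (Htu : sigma t u) by (apply sigma_trans with s; [apply sigma_sym|]; auto).
    now rewrite (alpha_spec s u), (alpha_spec t u).
Qed.

Hypothesis Hordered : ordered_action leX inv Xs th.

Lemma alpha_monotone s x y : Dsig Xs (inv s) x -> Dsig Xs (inv s) y ->
  leX x y -> leX (alpha s x) (alpha s y).
Proof.
  intros _ [t [Hst Hy]]%Dsig_inv Hxy.
  destruct Hordered as [Hideal Hiso].
  assert (Hx : Xs (inv t) x) by (eapply Hideal; eauto).
  rewrite (alpha_spec s t x), (alpha_spec s t y) by auto.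
  now apply Hiso.
Qed.

Lemma alpha_ordered : ordered_action leX inv (Dsig Xs) alpha.
Proof.
  split.
  - intros s x y [t [Hst Hy]] Hxy. exists t. split; [exact Hst|].
    eapply (proj1 Hordered); eauto.
  - intros s x y Hx Hy. split; [now apply alpha_monotone|intro Hxy].
    rewrite <- (alpha_inv_l s x Hx), <- (alpha_inv_l s y Hy).
    apply alpha_monotone; [rewrite inv_involutive; now apply alpha_maps..|exact Hxy].
Qed.

End Action.
End InverseSemigroupoid.

Theorem mainTheorem13 (S : inverse_semigroupoid) (X : Type)
    (leX : X -> X -> Prop)
    (leX_refl : forall x, leX x x)
    (leX_antisym : forall x y, leX x y -> leX y x -> x = y)
    (leX_trans : forall x y z, leX x y -> leX y z -> leX x z)
    (Xs : arr S -> X -> Prop) (th : arr S -> X -> X) :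
  E_unitary S ->
  sg_global_action S Xs th ->
  ordered_action leX inv Xs th ->
  (forall s t x, sigma s t -> Xs (inv s) x -> Xs (inv t) x -> th s x = th t x) /\
  exists al : arr S -> X -> X,
    (forall s t x, sigma s t -> Xs (inv t) x -> al s x = th t x) /\
    quot_partial_action S (Dsig Xs) al /\
    ordered_action leX inv (Dsig Xs) al /\
    (forall s x, Xs (inv s) x -> al s x = th s x).
Proof.
  intros HE Hglobal Hordered.
  split; [exact (theta_sigma_agree _ _ _ _ Hglobal HE)|].
  exists (alpha S X Xs th).
  split; [exact (alpha_spec _ _ _ _ Hglobal HE)|].
  split; [split|split].
  - exact (alpha_sigma_invariant _ _ _ _ Hglobal HE).
  - exact (alpha_partial_action _ _ _ _ Hglobal HE).
  - exact (alpha_ordered _ _ _ _ _ Hglobal HE Hordered).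
  - exact (alpha_theta _ _ _ _ Hglobal HE).
Qed.
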